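(* Let $n\ge 4$, $x_1,\dots,x_{n-1}>0$, $\gamma,\delta>0$ with $\gamma\ne1$, $\delta\ne1$, and set $x_0=1$. Let $\mathbf{R}=[r_{ij}]\in\mathbb{R}^{n\times n}$ be given by $r_{ij}=x_{j-1}/x_{i-1}$ for all $i,j$, except $r_{12}=\delta x_1$, $r_{21}=1/(\delta x_1)$, $r_{34}=\gamma x_3/x_2$, $r_{43}=x_2/(\gamma x_3)$. Then the characteristic polynomial of $\mathbf{R}$ is $$p_{\mathbf{R}}(\lambda)=\det(\mathbf{R}-\lambda\mathbf{I})=(-1)^n\lambda^{n-5}\left(\lambda^5-n\lambda^4-(n-2)\left(\gamma+\delta+\frac1\gamma+\frac1\delta-4\right)\lambda^2-c\lambda-(n-4)c\right),\quad c=\frac{(\gamma-1)^2(\delta-1)^2}{\gamma\delta}.$$ In particular, for $n=4$ (where $\mathbf{R}$ is the $4\times4$ matrix $\mathbf{Q}$ with these entries), $$p_{\mathbf{Q}}(\lambda)=\lambda^4-4\lambda^3-2\left(\gamma+\delta+\frac1\gamma+\frac1\delta-4\right)\lambda-\frac{(\gamma-1)^2(\delta-1)^2}{\gamma\delta}.$$ *)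

From HB Require Import structures.
From mathcomp Require Import all_boot all_order all_algebra.
Set Implicit Arguments. Unset Strict Implicit. Unset Printing Implicit Defensive.
Import Order.TTheory GRing.Theory Num.Theory.
Local Open Scope ring_scope.

(* The matrix R of the paper, 0-based indices: paper's r_{ij} (1-based) is
   entry (i-1, j-1) here.  Generic entry x_j / x_i (0-based), with the four
   exceptional entries (1,2),(2,1),(3,4),(4,3) (1-based). x 0 is expected = 1. *)
Definition Rmat (R : fieldType) (n : nat) (x : nat -> R) (gam del : R) : 'M[R]_n :=
  \matrix_(i < n, j < n)
    if ((i : nat) == 0%N) && ((j : nat) == 1%N) then del * x 1%N
    else if ((i : nat) == 1%N) && ((j : nat) == 0%N) then (del * x 1%N)^-1
    else if ((i : nat) == 2%N) && ((j : nat) == 3%N) then gam * x 3%N / x 2%N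
    else if ((i : nat) == 3%N) && ((j : nat) == 2%N) then x 2%N / (gam * x 3%N)
    else x (j : nat) / x (i : nat).

Definition charpoly_paper (R : comNzRingType) (n : nat) (M : 'M[R]_n) : {poly R} :=
  \det (map_mx polyC M - 'X%:M).

(* Conjugating by diag(x_0, ..., x_{n-1}) reduces everything to x = 1.  Then
   R - lambda I = B + J, where J is the all-ones matrix and B is block diagonal
   with blocks [[-lambda, delta - 1], [1/delta - 1, -lambda]],
   [[-lambda, gamma - 1], [1/gamma - 1, -lambda]] and -lambda I_{n-4}.  The
   matrix determinant lemma det (B + J) = det B (1 + 1^T B^-1 1) finishes the
   computation, as B^-1 1 is computed block by block.  To stay in the
   polynomial ring, B^-1 1 is replaced by a vector w with B w = a 1. *)

From HB Require Import structures.
From mathcomp Require Import all_boot all_order all_algebra.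
From mathcomp Require Import ring zify.
Set Implicit Arguments. Unset Strict Implicit. Unset Printing Implicit Defensive.
Import Order.TTheory GRing.Theory Num.Theory.
Local Open Scope ring_scope.

Lemma det_scalar_add_rank1 (T : comNzRingType) n (a : T) (w : 'cV[T]_n) (v : 'rV[T]_n) :
  a * \det (a%:M + w *m v) = (a + (v *m w) 0 0) * a ^+ n.
Proof.
(* Computing \det X through either of its two Schur complements. *)
pose X : 'M[T]_(1 + n) := block_mx 1%:M (- v) w a%:M.
have eL : block_mx 1%:M 0 (- w) 1%:M *m X = block_mx 1%:M (- v) 0 (a%:M + w *m v).
  rewrite mulmx_block ?mul1mx ?mul0mx ?addr0 ?add0r ?mulmx1.
  by rewrite ?mulNmx ?mulmxN ?opprK ?mul1mx ?addNr ?[_ + w *m v]addrC.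
have eR : X *m block_mx a%:M 0 (- w) 1%:M = block_mx (a%:M + v *m w) (- v) 0 a%:M.
  rewrite mulmx_block ?mul1mx ?mulmx0 ?add0r ?addr0 ?mulmx1 mul_mx_scalar mul_scalar_mx.
  by rewrite ?mulNmx ?mulmxN ?opprK ?scalerN ?subrr.
have := congr1 determinant eL; rewrite det_mulmx det_lblock det_ublock !det1 !mul1r => detX.
have := congr1 determinant eR; rewrite det_mulmx det_lblock det_ublock det1 mulr1 detX.
by rewrite !det_mx11 det_scalar mulrC !mxE eqxx mulr1n.
Qed.

Lemma det_add_rank1 (T : idomainType) n (B : 'M[T]_n) (u w : 'cV[T]_n) (v : 'rV[T]_n) a :
  a != 0 -> B *m w = a *: u -> a * \det (B + u *m v) = \det B * (a + (v *m w) 0 0).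
Proof.
move=> a_neq0 Bw.
have eB : a *: (B + u *m v) = B *m (a%:M + w *m v).
  by rewrite mulmxDr mulmxA Bw -scalemxAl mul_mx_scalar scalerDr.
apply: (mulfI (expf_neq0 n a_neq0)).
have := congr1 determinant eB; rewrite detZ det_mulmx => /(congr1 ( *%R a)).
by rewrite mulrCA => ->; rewrite mulrCA det_scalar_add_rank1; ring.
Qed.

(* [w / a] plays the role of [B^-1 1], and [S / a] that of [1^T B^-1 1]. *)
Definition ones_solution (T : pzRingType) n (B : 'M[T]_n) (a S : T) :=
  exists2 w : 'cV[T]_n, B *m w = a *: const_mx 1 & \sum_i w i 0 = S.

Lemma det_add_ones (T : idomainType) n (B : 'M[T]_n) a S :
  a != 0 -> ones_solution B a S -> a * \det (B + const_mx 1) = \det B * (a + S).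
Proof.
move=> a_neq0 [w Bw <-].
have -> : const_mx 1 = (const_mx 1 : 'cV[T]_n) *m (const_mx 1 : 'rV[T]_n).
  by apply/matrixP => i j; rewrite !mxE big_ord1 !mxE mulr1.
rewrite (det_add_rank1 _ a_neq0 Bw) mxE.
by under eq_bigr do rewrite mxE mul1r.
Qed.

Lemma ones_solution_block (T : comPzRingType) n1 n2 (B1 : 'M[T]_n1) (B2 : 'M[T]_n2) a1 a2 S1 S2 :
  ones_solution B1 a1 S1 -> ones_solution B2 a2 S2 ->
  ones_solution (block_mx B1 0 0 B2) (a1 * a2) (a2 * S1 + a1 * S2).
Proof.
move=> [w1 Bw1 <-] [w2 Bw2 <-]; exists (col_mx (a2 *: w1) (a1 *: w2)).
  rewrite mul_block_col !mul0mx addr0 add0r -!scalemxAr Bw1 Bw2 !scalerA mulrC.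
  by apply/matrixP => i j; rewrite !mxE; case: splitP => k _; rewrite !mxE.
rewrite big_split_ord !mulr_sumr /=.
by congr (_ + _); apply: eq_bigr => i _; rewrite ?col_mxEu ?col_mxEd mxE.
Qed.

Lemma ones_solution_scalar (T : pzRingType) n (x : T) :
  ones_solution (x%:M : 'M_n) x n%:R.
Proof.
exists (const_mx 1); first by rewrite mul_scalar_mx.
by rewrite (eq_bigr (fun=> 1)) => [|i _]; rewrite ?mxE // sumr_const card_ord.
Qed.

Definition mx2 (T : Type) (a b c d : T) : 'M[T]_2 :=
  \matrix_(i, j) if i == 0 then if j == 0 then a else b else if j == 0 then c else d.

Lemma det_mx2 (T : comPzRingType) (a b c d : T) : \det (mx2 a b c d) = a * d - b * c.
Proof.
rewrite (expand_det_row _ 0) !big_ord_recl big_ord0 /cofactor !det_mx11 !mxE /=.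
by rewrite expr0 expr1; ring.
Qed.

Lemma ones_solution_mx2 (T : comPzRingType) (x p q : T) :
  ones_solution (mx2 (- x) p q (- x)) (x ^+ 2 - p * q) (- (x *+ 2 + p + q)).
Proof.
exists (\col_i - (x + if i == 0 then p else q)).
  apply/matrixP => i j; rewrite !mxE !big_ord_recl big_ord0 !mxE /=.
  by case: i => [[|[|//]] ?] /=; ring.
by rewrite !big_ord_recl big_ord0 !mxE /=; ring.
Qed.

Lemma charpoly_paper_diag_similar (F : fieldType) n (M : 'M[F]_n) (d : 'I_n -> F) :
  (forall i, d i != 0) ->
  charpoly_paper (\matrix_(i, j) ((d i)^-1 * M i j * d j)) = charpoly_paper M.
Proof.
move=> d_neq0; rewrite /charpoly_paper.
pose D : 'M[{poly F}]_n := diag_mx (\row_i (d i)%:P).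
pose Dinv : 'M[{poly F}]_n := diag_mx (\row_i ((d i)^-1)%:P).
have -> : map_mx polyC (\matrix_(i, j) ((d i)^-1 * M i j * d j)) - 'X%:M =
          Dinv *m (map_mx polyC M - 'X%:M) *m D.
  apply/matrixP => i j; rewrite mul_mx_diag mul_diag_mx !mxE mulrBr mulrBl -!polyCM.
  congr (_ - _); case: (eqVneq i j) => [<-|_]; last by rewrite !mulr0n mulr0 mul0r.
  by rewrite mulr1n mulrAC -polyCM mulVf ?polyC1 ?mul1r.
rewrite !det_mulmx !det_diag mulrAC -big_split /=.
by rewrite big1 ?mul1r // => i _; rewrite !mxE -polyCM mulVf ?polyC1.
Qed.

Lemma Rmat_diag_similar (F : fieldType) n (x : nat -> F) (gam del : F) :
  x 0%N = 1 ->
  Rmat n x gam del = \matrix_(i, j) ((x i)^-1 * Rmat n (fun=> 1) gam del i j * x j).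
Proof.
move=> x0; apply/matrixP => i j; rewrite !mxE ?(mulr1, invr1, mul1r).
by do 4?case: ifP => [/andP[/eqP-> /eqP->]|_]; rewrite ?x0 ?invr1 ?invfM; ring.
Qed.

Lemma Rmat1_block (F : fieldType) m (gam del : F) :
  Rmat (2 + 2 + m) (fun=> 1) gam del =
  const_mx 1 + block_mx (block_mx (mx2 0 (del - 1) (del^-1 - 1) 0) 0 0
                                  (mx2 0 (gam - 1) (gam^-1 - 1) 0)) 0 0 0.
Proof.
apply/matrixP => i j; rewrite [LHS]mxE [RHS]mxE [const_mx 1 _ _]mxE.
case: (split_ordP i) => {}i ->; case: (split_ordP j) => {}j ->.
2-4: by rewrite ?block_mxEur ?block_mxEdl ?block_mxEdr mxE /= ?addSn ?add0n /= ?andbF addr0 divr1.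
rewrite block_mxEul /=.
case: (split_ordP i) => {}i ->; case: (split_ordP j) => {}j ->;
  rewrite ?block_mxEul ?block_mxEur ?block_mxEdl ?block_mxEdr /= ?addSn ?add0n.
all: case: i => [[|[|//]] ?]; case: j => [[|[|//]] ?]; rewrite !mxE /=.
all: by rewrite ?mulr1 ?divr1 ?div1r ?addr0 // addrC subrK.
Qed.

Lemma charpoly_ones_add_antidiag (F : fieldType) m (p q r s : F) :
  let a1 := 'X ^+ 2 - (p * q)%:P in
  let a2 := 'X ^+ 2 - (r * s)%:P in
  'X * charpoly_paper
         (const_mx 1 + block_mx (block_mx (mx2 0 p q 0) 0 0 (mx2 0 r s 0)) 0 0 (0 : 'M_m)) =
  (-1) ^+ m * 'X ^+ m *
  ('X * (a1 * a2 - a2 * ('X *+ 2 + (p + q)%:P) - a1 * ('X *+ 2 + (r + s)%:P))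
   - m%:R * a1 * a2).
Proof.
move=> a1 a2; rewrite /charpoly_paper.
have mx2_charmx (b c : F) :
    map_mx polyC (mx2 0 b c 0) - 'X%:M = mx2 (- 'X) b%:P c%:P (- 'X).
  apply/matrixP => i j; rewrite !mxE.
  by case: i => [[|[|//]] ?]; case: j => [[|[|//]] ?]; rewrite /= ?subr0 ?sub0r.
have -> : map_mx polyC (const_mx 1 +
            block_mx (block_mx (mx2 0 p q 0) 0 0 (mx2 0 r s 0)) 0 0 (0 : 'M_m)) - 'X%:M =
          block_mx (block_mx (mx2 (- 'X) p%:P q%:P (- 'X)) 0 0 (mx2 (- 'X) r%:P s%:P (- 'X)))
                   0 0 (- 'X)%:M + const_mx 1.
  rewrite map_mxD map_const_mx /= polyC1 -addrA addrC !map_block_mx !map_mx0.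
  rewrite (scalar_mx_block (2 + 2) m) (scalar_mx_block 2 2) !opp_block_mx !add_block_mx.
  by rewrite !subrr sub0r !mx2_charmx raddfN.
set d := \det _.
have a12_neq0 : a1 * a2 != 0 by rewrite mulf_neq0 ?monic_neq0 ?monicXnsubC.
have a_neq0 : a1 * a2 * - 'X != 0 by rewrite mulf_neq0 ?oppr_eq0 ?polyX_eq0.
have := ones_solution_block
  (ones_solution_block (ones_solution_mx2 'X p%:P q%:P) (ones_solution_mx2 'X r%:P s%:P))
  (ones_solution_scalar m (- 'X)).
rewrite -!polyCM -/a1 -/a2 => /(det_add_ones a_neq0).
rewrite -/d !det_ublock !det_mx2 det_scalar -!polyCM -/a1 -/a2 => key.
apply: (mulfI a12_neq0); transitivity (- (a1 * a2 * - 'X * d)).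
  by rewrite mulrN mulNr opprK -!mulrA.
rewrite key [(- 'X) ^+ m]exprNn /a1 /a2 !polyCD; ring.
Qed.

Lemma charpoly_Rmat (F : fieldType) m (x : nat -> F) (gam del : F) :
  x 0%N = 1 -> (forall i : 'I_(2 + 2 + m), x i != 0) -> gam != 0 -> del != 0 ->
  let c := (gam - 1) ^+ 2 * (del - 1) ^+ 2 / (gam * del) in
  let s := gam + del + gam^-1 + del^-1 - 4 in
  'X * charpoly_paper (Rmat (2 + 2 + m) x gam del) =
  (-1) ^+ m * 'X ^+ m *
  ('X ^+ 5 - (m + 4)%:R *: 'X ^+ 4 - ((m + 2)%:R * s) *: 'X ^+ 2 - c *: 'X - (m%:R * c)%:P).
Proof.
move=> x0 x_neq0 gam_neq0 del_neq0 c s.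
rewrite Rmat_diag_similar // charpoly_paper_diag_similar // Rmat1_block.
rewrite charpoly_ones_add_antidiag; congr (_ * _).
set P := (del - 1) * (del^-1 - 1); set Q := (gam - 1) * (gam^-1 - 1).
have -> : del - 1 + (del^-1 - 1) = - P by rewrite /P; field; rewrite ?gam_neq0 ?del_neq0.
have -> : gam - 1 + (gam^-1 - 1) = - Q by rewrite /Q; field; rewrite ?gam_neq0 ?del_neq0.
have -> : s = - (P + Q) by rewrite /s /P /Q; field; rewrite ?gam_neq0 ?del_neq0.
have -> : c = P * Q by rewrite /c /P /Q; field; rewrite ?gam_neq0 ?del_neq0.
rewrite -!mul_polyC !(polyCN, polyCD, polyCM, polyCMn) !natrD; ring.
Qed.

Theorem theorem4 (R : realFieldType) (n : nat) (x : nat -> R) (gam del : R) :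
  (4 <= n)%N ->
  x 0%N = 1 ->
  (forall k : nat, (1 <= k <= n.-1)%N -> 0 < x k) ->
  0 < gam -> 0 < del -> gam != 1 -> del != 1 ->
  let c := (gam - 1) ^+ 2 * (del - 1) ^+ 2 / (gam * del) in
  let s := gam + del + gam^-1 + del^-1 - 4 in
  ((5 <= n)%N ->
     charpoly_paper (Rmat n x gam del) =
     (-1) ^+ n *: ('X ^+ (n - 5) *
       ('X ^+ 5 - n%:R *: 'X ^+ 4 - ((n - 2)%:R * s) *: 'X ^+ 2
        - c *: 'X - ((n - 4)%:R * c)%:P)))
  /\
  (n = 4%N ->
     charpoly_paper (Rmat n x gam del) =
     'X ^+ 4 - 4%:R *: 'X ^+ 3 - (2%:R * s) *: 'X - c%:P).
Proof.
move=> n_ge4 x0 x_pos gam_pos del_pos _ _ c s.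
have x_neq0 (i : 'I_n) : x i != 0.
  have [->|i_neq0] := eqVneq (i : nat) 0%N; first by rewrite x0 oner_neq0.
  by rewrite lt0r_neq0 // x_pos //; move: i_neq0 (ltn_ord i); lia.
have [m def_n] : exists m, n = (2 + 2 + m)%N by exists (n - 4)%N; rewrite subnKC.
subst n.
have /= := charpoly_Rmat x0 x_neq0 (lt0r_neq0 gam_pos) (lt0r_neq0 del_pos).
rewrite -/c -/s => key.
have X_neq0 : 'X != 0 :> {poly R} by rewrite polyX_eq0.
case: m {n_ge4 x_pos x_neq0} key => [|m] key; split=> // _; apply: (mulfI X_neq0); rewrite key.
  by rewrite -!mul_polyC; ring.
have -> : (2 + 2 + m.+1 - 5 = m)%N by lia.
have -> : (2 + 2 + m.+1 - 2 = m.+1 + 2)%N by lia.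
have -> : (2 + 2 + m.+1 - 4 = m.+1)%N by lia.
have -> : (2 + 2 + m.+1 = m.+1 + 4)%N by lia.
rewrite -!mul_polyC rmorph_sign exprD !exprS; ring.
Qed.
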